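(* Let $m\ge1$ be an integer and let $\xi_1,\dots,\xi_m$ be the zeroes of the function $\alpha_m$. Suppose that for each $i$, $\eta_i=\eta_i(\Delta)$ are numbers satisfying $\eta_i=\xi_i-1+s_i\sqrt{(\xi_i-1)^2-1}+o(1)$ as $\Delta\downarrow0$ for some sign $s_i\in\{+1,-1\}$, where the sign is chosen such that $|\eta_i|<1$ for all sufficiently small $\Delta$. Then necessarily $s_i=-1$, i.e. $$\eta_i=\xi_i-1-\sqrt{(\xi_i-1)^2-1}+o(1),\qquad i=1,\dots,m,$$ and moreover $\xi_i-1-\sqrt{(\xi_i-1)^2-1}\in(0,1)$ for all $i$.
   Context: For $x\in\mathbb{R}\setminus\{0\}$ the functions $\alpha_k(x)$, $k\ge0$, are defined by the power series expansion in $z$ $$\frac{\sinh(z)}{\cosh(z)-1+x}=\sum_{k=0}^\infty\alpha_k(x)z^{2k+1}.$$ (In the paper, $m=p-q-1$ for a CARMA$(p,q)$ process and $\eta_i$ are the ''spurious'' moving average coefficients of the sampled process.) *)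

From Stdlib Require Import Reals.
From Coquelicot Require Import Coquelicot.
Open Scope R_scope.

Definition gen_fun (x : R) : R -> R := fun z => sinh z / (cosh z - 1 + x).

Definition alpha (k : nat) (x : R) : R :=
  Derive_n (gen_fun x) (2 * k + 1) 0 / INR (Factorial.fact (2 * k + 1)).

From Stdlib Require Import Reals Lra Lia.
From Coquelicot Require Import Coquelicot.
Open Scope R_scope.
Set Bullet Behavior "Strict Subproofs".

(* Put u := 1 / (cosh z - 1 + x) and kappa := 1 - (x - 1)^2.  The generating function
   g := sinh z * u solves g' = (1 - g^2 + kappa u^2) / 2 and u' = - g u, so by the Leibniz
   rule its derivatives at 0 obey quadratic recursions; moreover g is odd and u is even.
   If 0 < x <= 2 then kappa >= 0, and the sign change n |-> (-1)^(n/2) turns these into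
   recursions with nonnegative coefficients and positive initial values, so no odd
   derivative of g at 0 vanishes; if x < 0 the same argument applies to -g, -u and
   -kappa > 0.  Hence every nonzero root xi of alpha_m exceeds 2: then
   xi - 1 - sqrt((xi - 1)^2 - 1) lies in (0, 1), whereas xi - 1 + sqrt((xi - 1)^2 - 1) > 1
   cannot be the limit of numbers in the open unit disc. *)

Definition leibniz (n : nat) (a b : nat -> R) : R :=
  sum_f_R0 (fun k => Binomial.C n k * a k * b (n - k)%nat) n.

Lemma C_pos n k : 0 < Binomial.C n k.
Proof.
  unfold Binomial.C. apply Rdiv_lt_0_compat; [|apply Rmult_lt_0_compat]; apply INR_fact_lt_0.
Qed.

Lemma C_n_n n : Binomial.C n n = 1.
Proof.
  unfold Binomial.C. rewrite Nat.sub_diag. simpl. field. apply INR_fact_neq_0.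
Qed.

Lemma sum_f_R0_nonneg (f : nat -> R) N :
  (forall k, (k <= N)%nat -> 0 <= f k) -> 0 <= sum_f_R0 f N.
Proof.
  intros Hf. rewrite <- (sum_eq_R0 (fun _ => 0) N) by reflexivity. now apply sum_Rle.
Qed.

Lemma leibniz_ext n a b a' b' :
  (forall k, (k <= n)%nat -> a k = a' k) -> (forall k, (k <= n)%nat -> b k = b' k) ->
  leibniz n a b = leibniz n a' b'.
Proof.
  intros Ha Hb. apply sum_eq. intros k Hk. now rewrite Ha, Hb by lia.
Qed.

Lemma leibniz_S n a b :
  leibniz (S n) a b = leibniz n (fun k => a (S k)) b + leibniz n a (fun k => b (S k)).
Proof.
  unfold leibniz. destruct n as [|n].
  { simpl. rewrite !C_n_n, C_n_0. ring. }
  rewrite (decomp_sum _ (S (S n))), (decomp_sum (fun k => Binomial.C (S n) k * a k * _))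
    by lia.
  simpl pred. rewrite !tech5, !C_n_0, !C_n_n, !Nat.sub_0_r, !Nat.sub_diag.
  rewrite (sum_eq (fun i => Binomial.C (S (S n)) (S i) * a (S i) * b (S (S n) - S i)%nat)
             (fun i => Binomial.C (S n) i * a (S i) * b (S n - i)%nat
                       + Binomial.C (S n) (S i) * a (S i) * b (S (S n - S i))%nat)).
  - rewrite plus_sum. ring.
  - intros i Hi. rewrite <- pascal by lia. replace (S (S n - S i)) with (S n - i)%nat by lia.
    replace (S (S n) - S i)%nat with (S n - i)%nat by lia. ring.
Qed.

Lemma leibniz_nonneg n a b :
  (forall k, (k <= n)%nat -> 0 <= a k) -> (forall k, (k <= n)%nat -> 0 <= b k) ->
  0 <= leibniz n a b.
Proof.
  intros Ha Hb. apply sum_f_R0_nonneg. intros k Hk.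
  pose proof (C_pos n k). pose proof (Ha k Hk). pose proof (Hb (n - k)%nat ltac:(lia)).
  apply Rmult_le_pos; [apply Rmult_le_pos|]; lra.
Qed.

Lemma leibniz_ge_head n a b :
  (forall k, (k <= n)%nat -> 0 <= a k) -> (forall k, (k <= n)%nat -> 0 <= b k) ->
  a 0%nat * b n <= leibniz n a b.
Proof.
  intros Ha Hb. unfold leibniz. destruct n as [|n].
  { simpl. rewrite C_n_0. lra. }
  rewrite decomp_sum, C_n_0, Nat.sub_0_r by lia.
  enough (0 <= sum_f_R0 (fun k => Binomial.C (S n) (S k) * a (S k) * b (S n - S k)%nat) n)
    by (simpl pred; lra).
  apply sum_f_R0_nonneg. intros k Hk.
  pose proof (C_pos (S n) (S k)). pose proof (Ha (S k) ltac:(lia)).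
  pose proof (Hb (S n - S k)%nat ltac:(lia)).
  apply Rmult_le_pos; [apply Rmult_le_pos|]; lra.
Qed.

Lemma Derive_n_Derive f k t : Derive_n (Derive f) k t = Derive_n f (S k) t.
Proof. rewrite <- Nat.add_1_r. apply (Derive_n_comp f k 1). Qed.

Lemma ex_derive_n_Derive f k t : ex_derive_n f (S (S k)) t <-> ex_derive_n (Derive f) (S k) t.
Proof.
  change (ex_derive (Derive_n f (S k)) t <-> ex_derive (Derive_n (Derive f) k) t).
  split; apply ex_derive_ext; intros y; [symmetry|]; apply Derive_n_Derive.
Qed.

Section DerivativesUpTo.

Variable O : R -> Prop.
Hypothesis O_open : open O.

Definition ex_derive_upto (n : nat) (f : R -> R) : Prop :=
  forall k t, (k <= n)%nat -> O t -> ex_derive_n f k t.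

Lemma ex_derive_upto_locally n f t :
  ex_derive_upto n f -> O t -> locally t (fun y => forall k, (k <= n)%nat -> ex_derive_n f k y).
Proof. intros Hf Ht. apply (locally_open O); auto. Qed.

Lemma ex_derive_upto_le m n f : (m <= n)%nat -> ex_derive_upto n f -> ex_derive_upto m f.
Proof. intros Hmn Hf k t Hk Ht. apply Hf; auto; lia. Qed.

Lemma ex_derive_upto_Derive n f : ex_derive_upto (S n) f -> ex_derive_upto n (Derive f).
Proof.
  intros Hf [|k] t Hk Ht; [exact I|].
  apply (proj1 (ex_derive_n_Derive f k t)), Hf; auto; lia.
Qed.

Lemma ex_derive_upto_S n f :
  (forall t, O t -> ex_derive f t) -> ex_derive_upto n (Derive f) -> ex_derive_upto (S n) f.
Proof.
  intros H1 Hf [|[|k]] t Hk Ht; [exact I | now apply H1 |].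
  apply (proj2 (ex_derive_n_Derive f k t)), Hf; auto; lia.
Qed.

Lemma ex_derive_upto_ext n f g :
  (forall t, O t -> f t = g t) -> ex_derive_upto n f -> ex_derive_upto n g.
Proof.
  intros Efg Hf k t Hk Ht. apply (ex_derive_n_ext_loc f); [|now apply Hf].
  now apply (locally_open O).
Qed.

Lemma ex_derive_upto_const n c : ex_derive_upto n (fun _ => c).
Proof. intros k t _ _. apply ex_derive_n_const. Qed.

Lemma ex_derive_upto_scal n c f : ex_derive_upto n f -> ex_derive_upto n (fun y => c * f y).
Proof. intros Hf k t Hk Ht. now apply ex_derive_n_scal_l, Hf. Qed.

Lemma ex_derive_upto_opp n f : ex_derive_upto n f -> ex_derive_upto n (fun y => - f y).
Proof. intros Hf k t Hk Ht. now apply ex_derive_n_opp, Hf. Qed.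

Lemma ex_derive_upto_plus n f g :
  ex_derive_upto n f -> ex_derive_upto n g -> ex_derive_upto n (fun y => f y + g y).
Proof.
  intros Hf Hg k t Hk Ht.
  apply ex_derive_n_plus; apply (ex_derive_upto_locally k); auto;
    now apply (ex_derive_upto_le k n).
Qed.

Lemma ex_derive_upto_minus n f g :
  ex_derive_upto n f -> ex_derive_upto n g -> ex_derive_upto n (fun y => f y - g y).
Proof.
  intros Hf Hg k t Hk Ht.
  apply ex_derive_n_minus; apply (ex_derive_upto_locally k); auto;
    now apply (ex_derive_upto_le k n).
Qed.

Lemma locally_Derive_mult f h t :
  ex_derive_upto 1 f -> ex_derive_upto 1 h -> O t ->
  locally t (fun y => Derive (fun z => f z * h z) y = Derive f y * h y + f y * Derive h y).
Proof.
  intros Hf Hh Ht. apply (locally_open O); auto. intros y Hy.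
  apply Derive_mult; [apply (Hf 1%nat) | apply (Hh 1%nat)]; auto.
Qed.

Lemma ex_derive_upto_mult n : forall f h,
  ex_derive_upto n f -> ex_derive_upto n h -> ex_derive_upto n (fun y => f y * h y).
Proof.
  induction n as [|n IH]; intros f h Hf Hh.
  { intros k t Hk _. replace k with 0%nat by lia. exact I. }
  assert (Hf1 := ex_derive_upto_le 1 (S n) f ltac:(lia) Hf).
  assert (Hh1 := ex_derive_upto_le 1 (S n) h ltac:(lia) Hh).
  apply ex_derive_upto_S.
  - intros t Ht. apply ex_derive_mult; [apply (Hf 1%nat) | apply (Hh 1%nat)]; auto; lia.
  - apply (ex_derive_upto_ext n (fun y => Derive f y * h y + f y * Derive h y)).
    + intros t Ht. symmetry.
      exact (locally_singleton _ _ (locally_Derive_mult f h t Hf1 Hh1 Ht)).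
    + apply ex_derive_upto_plus; apply IH; auto using ex_derive_upto_Derive;
        apply (ex_derive_upto_le n (S n)); auto.
Qed.

Lemma Derive_n_mult n : forall f h t,
  ex_derive_upto n f -> ex_derive_upto n h -> O t ->
  Derive_n (fun y => f y * h y) n t
  = leibniz n (fun k => Derive_n f k t) (fun k => Derive_n h k t).
Proof.
  induction n as [|n IH]; intros f h t Hf Hh Ht.
  { unfold leibniz. simpl. rewrite C_n_0. ring. }
  assert (Hf1 := ex_derive_upto_le 1 (S n) f ltac:(lia) Hf).
  assert (Hh1 := ex_derive_upto_le 1 (S n) h ltac:(lia) Hh).
  assert (Hf' := ex_derive_upto_Derive n f Hf).
  assert (Hh' := ex_derive_upto_Derive n h Hh).
  assert (Hfn := ex_derive_upto_le n (S n) f ltac:(lia) Hf).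
  assert (Hhn := ex_derive_upto_le n (S n) h ltac:(lia) Hh).
  rewrite <- Derive_n_Derive, (Derive_n_ext_loc _ _ n t (locally_Derive_mult f h t Hf1 Hh1 Ht)).
  rewrite Derive_n_plus
    by (apply (ex_derive_upto_locally n); auto; now apply ex_derive_upto_mult).
  rewrite IH, IH, leibniz_S by auto.
  f_equal; apply leibniz_ext; intros; now rewrite ?Derive_n_Derive.
Qed.

End DerivativesUpTo.

Lemma cosh_sq_sub_sinh_sq y : cosh y ^ 2 - sinh y ^ 2 = 1.
Proof.
  unfold cosh, sinh.
  assert (exp y * exp (- y) = 1) by (rewrite <- exp_plus, Rplus_opp_r; apply exp_0).
  field_simplify. nra.
Qed.

Lemma sinh_opp y : sinh (- y) = - sinh y.
Proof. unfold sinh. rewrite Ropp_involutive. field. Qed.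

Lemma cosh_opp y : cosh (- y) = cosh y.
Proof. unfold cosh. rewrite Ropp_involutive. field. Qed.

Lemma Derive_n_odd_fun_even f n :
  (forall y, f (- y) = - f y) ->
  locally 0 (fun y => forall k, (k <= n)%nat -> ex_derive_n f k y) ->
  Nat.Even n -> Derive_n f n 0 = 0.
Proof.
  intros Hodd Hf [m ->].
  assert (E : Derive_n f (2 * m) 0 = - Derive_n (fun y => f (- y)) (2 * m) 0).
  { rewrite <- Derive_n_opp. apply Derive_n_ext. intros y. rewrite Hodd. ring. }
  rewrite Derive_n_comp_opp, Ropp_0, pow_1_even in E by now rewrite Ropp_0.
  lra.
Qed.

Lemma Derive_n_even_fun_odd f n :
  (forall y, f (- y) = f y) ->
  locally 0 (fun y => forall k, (k <= n)%nat -> ex_derive_n f k y) ->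
  Nat.Odd n -> Derive_n f n 0 = 0.
Proof.
  intros Hev Hf [m ->].
  assert (E : Derive_n f (2 * m + 1) 0 = Derive_n (fun y => f (- y)) (2 * m + 1) 0).
  { apply Derive_n_ext. intros y. now rewrite Hev. }
  rewrite Derive_n_comp_opp, Ropp_0, pow_add, pow_1_even in E by now rewrite Ropp_0.
  lra.
Qed.

Section GeneratingFunction.

Variable x : R.
Hypothesis x_neq0 : x <> 0.

Definition gen_denom (y : R) : R := cosh y - 1 + x.
Definition gen_recip (y : R) : R := / gen_denom y.
Definition kappa : R := 1 - (x - 1) ^ 2.

Let g := gen_fun x.
Let Dom y := gen_denom y <> 0.

Lemma is_derive_gen_denom y : is_derive gen_denom y (sinh y).
Proof.
  unfold gen_denom. apply is_derive_Reals.
  replace (sinh y) with (sinh y - 0 + 0) by ring.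
  apply derivable_pt_lim_plus; [apply derivable_pt_lim_minus|].
  - apply derivable_pt_lim_cosh.
  - apply derivable_pt_lim_const.
  - apply derivable_pt_lim_const.
Qed.

Lemma gen_denom_open : open Dom.
Proof.
  apply (open_comp gen_denom (fun z => z <> 0)); [|apply open_neq].
  intros y _. apply (ex_derive_continuous gen_denom y). eexists. apply is_derive_gen_denom.
Qed.

Lemma gen_denom_0_neq0 : Dom 0.
Proof. unfold Dom, gen_denom. rewrite cosh_0. now replace (1 - 1 + x) with x by ring. Qed.

Lemma is_derive_gen_recip y : Dom y -> is_derive gen_recip y (- (g y * gen_recip y)).
Proof.
  intros Hy. replace (- (g y * gen_recip y)) with (- sinh y / gen_denom y ^ 2).
  - apply is_derive_inv; [apply is_derive_gen_denom | exact Hy].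
  - unfold g, gen_fun, gen_recip, gen_denom in *. field. exact Hy.
Qed.

Lemma is_derive_gen_fun y :
  Dom y -> is_derive g y (/ 2 * (1 - g y * g y + kappa * (gen_recip y * gen_recip y))).
Proof.
  intros Hy.
  apply (is_derive_ext (fun z => sinh z * gen_recip z)); [reflexivity|].
  replace (/ 2 * _) with (cosh y * gen_recip y + sinh y * (- (g y * gen_recip y))).
  - apply (is_derive_mult sinh gen_recip).
    + apply is_derive_Reals, derivable_pt_lim_sinh.
    + now apply is_derive_gen_recip.
    + intros; apply Rmult_comm.
  - assert (Hs : sinh y * sinh y = cosh y * cosh y - 1)
      by (pose proof (cosh_sq_sub_sinh_sq y); nra).
    unfold g, gen_fun, gen_recip, kappa, Dom, gen_denom in *.
    replace (cosh y * _ + _) with ((cosh y * (cosh y - 1 + x) - sinh y * sinh y)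
                                   / (cosh y - 1 + x) ^ 2) by (field; exact Hy).
    replace (/ 2 * _) with (((cosh y - 1 + x) ^ 2 - sinh y * sinh y + 1 - (x - 1) ^ 2)
                            / (2 * (cosh y - 1 + x) ^ 2)) by (field; exact Hy).
    rewrite Hs. field. exact Hy.
Qed.

Lemma gen_smooth n : ex_derive_upto Dom n g /\ ex_derive_upto Dom n gen_recip.
Proof.
  induction n as [|n [Hg Hu]].
  { split; intros k t Hk _; replace k with 0%nat by lia; exact I. }
  split; apply ex_derive_upto_S.
  - intros t Ht. eexists. now apply is_derive_gen_fun.
  - apply (ex_derive_upto_ext Dom gen_denom_open n
             (fun y => / 2 * (1 - g y * g y + kappa * (gen_recip y * gen_recip y)))).
    { intros t Ht. symmetry. apply is_derive_unique. now apply is_derive_gen_fun. }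
    pose proof gen_denom_open as Hopen.
    apply ex_derive_upto_scal, ex_derive_upto_plus; [exact Hopen | |].
    + apply ex_derive_upto_minus; [exact Hopen | apply ex_derive_upto_const |].
      now apply ex_derive_upto_mult.
    + now apply ex_derive_upto_scal, ex_derive_upto_mult.
  - intros t Ht. eexists. now apply is_derive_gen_recip.
  - apply (ex_derive_upto_ext Dom gen_denom_open n (fun y => - (g y * gen_recip y))).
    { intros t Ht. symmetry. apply is_derive_unique. now apply is_derive_gen_recip. }
    apply ex_derive_upto_opp, ex_derive_upto_mult; auto using gen_denom_open.
Qed.

Lemma ex_derive_upto_near_0 n f :
  ex_derive_upto Dom n f -> locally 0 (fun y => forall k, (k <= n)%nat -> ex_derive_n f k y).
Proof. intros Hf. exact (ex_derive_upto_locally Dom gen_denom_open n f 0 Hf gen_denom_0_neq0). Qed.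

Definition dgen (n : nat) : R := Derive_n g n 0.
Definition drecip (n : nat) : R := Derive_n gen_recip n 0.

Lemma dgen_0 : dgen 0 = 0.
Proof. unfold dgen, g, gen_fun. simpl. rewrite sinh_0. unfold Rdiv. ring. Qed.

Lemma drecip_0 : drecip 0 = / x.
Proof. unfold drecip, gen_recip, gen_denom. simpl. rewrite cosh_0. f_equal. ring. Qed.

Lemma dgen_1 : dgen 1 = / x.
Proof.
  change (Derive g 0 = / x).
  rewrite (is_derive_unique _ _ _ (is_derive_gen_fun 0 gen_denom_0_neq0)).
  unfold g, gen_fun, gen_recip, gen_denom, kappa. rewrite sinh_0, cosh_0.
  field. exact x_neq0.
Qed.

Lemma drecip_S n : drecip (S n) = - leibniz n dgen drecip.
Proof.
  destruct (gen_smooth n) as [Hg Hu].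
  unfold drecip. rewrite <- Derive_n_Derive.
  rewrite (Derive_n_ext_loc _ (fun y => - (g y * gen_recip y))).
  - rewrite Derive_n_opp. f_equal.
    apply (Derive_n_mult Dom gen_denom_open); auto using gen_denom_0_neq0.
  - apply (locally_open _ _ gen_denom_open); [|apply gen_denom_0_neq0].
    intros y Hy. now apply is_derive_unique, is_derive_gen_recip.
Qed.

Lemma dgen_SS n :
  dgen (S (S n)) = / 2 * (kappa * leibniz (S n) drecip drecip - leibniz (S n) dgen dgen).
Proof.
  destruct (gen_smooth (S n)) as [Hg Hu].
  assert (Hgg := ex_derive_upto_mult Dom gen_denom_open _ _ _ Hg Hg).
  assert (Huu := ex_derive_upto_mult Dom gen_denom_open _ _ _ Hu Hu).
  unfold dgen. rewrite <- Derive_n_Derive.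
  rewrite (Derive_n_ext_loc _
             (fun y => / 2 * ((1 - g y * g y) + kappa * (gen_recip y * gen_recip y)))).
  - rewrite Derive_n_scal_l, Derive_n_plus, Derive_n_minus, Derive_n_const, Derive_n_scal_l.
    1: rewrite !(Derive_n_mult Dom gen_denom_open) by auto using gen_denom_0_neq0;
         unfold drecip; ring.
    all: apply ex_derive_upto_near_0;
      auto using ex_derive_upto_const, ex_derive_upto_scal, ex_derive_upto_minus, gen_denom_open.
  - apply (locally_open _ _ gen_denom_open); [|apply gen_denom_0_neq0].
    intros y Hy. now apply is_derive_unique, is_derive_gen_fun.
Qed.

Lemma dgen_even n : Nat.Even n -> dgen n = 0.
Proof.
  apply Derive_n_odd_fun_even.
  - intros y. unfold g, gen_fun. rewrite sinh_opp, cosh_opp. unfold Rdiv. ring.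
  - apply ex_derive_upto_near_0, gen_smooth.
Qed.

Lemma drecip_odd n : Nat.Odd n -> drecip n = 0.
Proof.
  apply Derive_n_even_fun_odd.
  - intros y. unfold gen_recip, gen_denom. now rewrite cosh_opp.
  - apply ex_derive_upto_near_0, gen_smooth.
Qed.

End GeneratingFunction.

Lemma odd_terms_pos (a v : nat -> R) (K : R) :
  0 <= K -> a 0%nat = 0 -> 0 < a 1%nat -> 0 < v 0%nat ->
  (forall n, a (S (S n)) = / 2 * (leibniz (S n) a a + K * leibniz (S n) v v)) ->
  (forall n, v (S n) = leibniz n a v) ->
  forall k, 0 < a (S (2 * k)).
Proof.
  intros HK Ha0 Ha1 Hv0 Ha Hv.
  assert (Hnonneg : forall n m, (m <= n)%nat -> 0 <= a m /\ 0 <= v m).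
  { induction n as [|n IH]; intros m Hm.
    { replace m with 0%nat by lia. lra. }
    destruct (Nat.eq_dec m (S n)) as [->|]; [|apply IH; lia].
    assert (Han : forall i, (i <= n)%nat -> 0 <= a i) by (intros; apply IH; lia).
    assert (Hvn : forall i, (i <= n)%nat -> 0 <= v i) by (intros; apply IH; lia).
    split; [destruct n as [|n]; [lra|] | rewrite Hv; now apply leibniz_nonneg].
    rewrite Ha. pose proof (leibniz_nonneg _ _ _ Han Han).
    pose proof (leibniz_nonneg _ _ _ Hvn Hvn). nra. }
  assert (Ha' : forall i, 0 <= a i) by (intros i; apply (Hnonneg i); lia).
  assert (Hv' : forall i, 0 <= v i) by (intros i; apply (Hnonneg i); lia).
  induction k as [|k IH]; [exact Ha1|].
  replace (S (2 * S k)) with (S (S (S (2 * k)))) by lia.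
  rewrite Ha, leibniz_S.
  (* a_{2k+3} >= a_1 a_{2k+1} / 2, from the head term of the first Leibniz sum *)
  pose proof (leibniz_ge_head (S (2 * k)) (fun i => a (S i)) a
                (fun i _ => Ha' (S i)) (fun i _ => Ha' i)).
  pose proof (leibniz_nonneg (S (2 * k)) a (fun i => a (S i))
                (fun i _ => Ha' i) (fun i _ => Ha' (S i))).
  pose proof (leibniz_nonneg (S (S (2 * k))) v v (fun i _ => Hv' i) (fun i _ => Hv' i)).
  nra.
Qed.

(* twist n * dgen x n and twist n * drecip x n are the derivatives at 0 of
   h(z) := - i g(i z) = sin z / (cos z - 1 + x) and v(z) := u(i z) = 1 / (cos z - 1 + x),
   which solve h' = (1 + h^2 + kappa v^2) / 2 and v' = h v: nonnegative coefficients. *)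
Definition twist (n : nat) : R := (-1) ^ Nat.div2 n.

Lemma twist_even m : twist (2 * m) = (-1) ^ m.
Proof. unfold twist. now rewrite Nat.div2_double. Qed.

Lemma twist_odd m : twist (2 * m + 1) = (-1) ^ m.
Proof. unfold twist. now rewrite Nat.add_1_r, Nat.div2_succ_double. Qed.

Lemma twist_S_add_even j m : Nat.Even j -> Nat.Even m -> twist (S (j + m)) = twist j * twist m.
Proof.
  intros [a ->] [b ->]. replace (S (2 * a + 2 * b)) with (2 * (a + b) + 1)%nat by lia.
  now rewrite twist_odd, !twist_even, pow_add.
Qed.

Lemma twist_S_add_odd_l j m : Nat.Odd j -> twist (S (j + m)) = - (twist j * twist m).
Proof.
  intros [a ->]. destruct (Nat.Even_or_Odd m) as [[b ->]|[b ->]].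
  - replace (S (2 * a + 1 + 2 * b)) with (2 * (a + b + 1))%nat by lia.
    rewrite twist_even, twist_odd, twist_even, !pow_add. ring.
  - replace (S (2 * a + 1 + (2 * b + 1))) with (2 * (a + b + 1) + 1)%nat by lia.
    rewrite !twist_odd, !pow_add. ring.
Qed.

Lemma leibniz_twist (eps : R) a b n :
  (forall j m, twist j * a j * (twist m * b m) = eps * twist (S (j + m)) * (a j * b m)) ->
  leibniz n (fun k => twist k * a k) (fun k => twist k * b k) = eps * twist (S n) * leibniz n a b.
Proof.
  intros Htw. unfold leibniz. rewrite scal_sum. apply sum_eq. intros k Hk.
  replace (Binomial.C n k * (twist k * a k) * (twist (n - k) * b (n - k)%nat))
    with (Binomial.C n k * (twist k * a k * (twist (n - k) * b (n - k)%nat))) by ring.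
  rewrite Htw. replace (k + (n - k))%nat with n by lia. ring.
Qed.

Lemma twist_mul_odd_supported (a b : nat -> R) :
  (forall j, Nat.Even j -> a j = 0) ->
  forall j m, twist j * a j * (twist m * b m) = -1 * twist (S (j + m)) * (a j * b m).
Proof.
  intros Ha j m. destruct (Nat.Even_or_Odd j) as [Hj|Hj].
  - rewrite (Ha j Hj). ring.
  - rewrite (twist_S_add_odd_l j m Hj). ring.
Qed.

Lemma twist_mul_even_supported (a b : nat -> R) :
  (forall j, Nat.Odd j -> a j = 0) -> (forall m, Nat.Odd m -> b m = 0) ->
  forall j m, twist j * a j * (twist m * b m) = 1 * twist (S (j + m)) * (a j * b m).
Proof.
  intros Ha Hb j m.
  destruct (Nat.Even_or_Odd j) as [Hj|Hj]; [|rewrite (Ha j Hj); ring].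
  destruct (Nat.Even_or_Odd m) as [Hm|Hm]; [|rewrite (Hb m Hm); ring].
  rewrite (twist_S_add_even j m Hj Hm). ring.
Qed.

Lemma leibniz_opp n a b : leibniz n (fun k => - a k) (fun k => - b k) = leibniz n a b.
Proof. apply sum_eq. intros k _. ring. Qed.

Lemma dgen_odd_twisted_pos x : 0 < x <= 2 ->
  forall k, 0 < twist (S (2 * k)) * dgen x (S (2 * k)).
Proof.
  intros Hx. assert (Hx0 : x <> 0) by lra.
  apply (odd_terms_pos (fun n => twist n * dgen x n) (fun n => twist n * drecip x n)
           (kappa x)).
  - unfold kappa. nra.
  - rewrite dgen_0 by exact Hx0. ring.
  - rewrite dgen_1 by exact Hx0. unfold twist. simpl. rewrite Rmult_1_l.
    now apply Rinv_0_lt_compat.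
  - rewrite drecip_0 by exact Hx0. unfold twist. simpl. rewrite Rmult_1_l.
    now apply Rinv_0_lt_compat.
  - intros n. rewrite dgen_SS by exact Hx0.
    rewrite (leibniz_twist (-1)), (leibniz_twist 1).
    + ring.
    + apply twist_mul_even_supported; apply drecip_odd; exact Hx0.
    + apply twist_mul_odd_supported. now apply dgen_even.
  - intros n. rewrite drecip_S by exact Hx0. rewrite (leibniz_twist (-1)).
    + ring.
    + apply twist_mul_odd_supported. now apply dgen_even.
Qed.

Lemma dgen_odd_neg x : x < 0 -> forall k, dgen x (S (2 * k)) < 0.
Proof.
  intros Hx k. assert (Hx0 : x <> 0) by lra.
  enough (0 < - dgen x (S (2 * k))) by lra.
  apply (odd_terms_pos (fun n => - dgen x n) (fun n => - drecip x n) (- kappa x)).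
  - unfold kappa. nra.
  - rewrite dgen_0 by exact Hx0. ring.
  - rewrite dgen_1 by exact Hx0. rewrite <- Rinv_opp. apply Rinv_0_lt_compat. lra.
  - rewrite drecip_0 by exact Hx0. rewrite <- Rinv_opp. apply Rinv_0_lt_compat. lra.
  - intros n. rewrite dgen_SS, !leibniz_opp by exact Hx0. ring.
  - intros n. rewrite drecip_S, leibniz_opp by exact Hx0. ring.
Qed.

Lemma dgen_odd_neq0 x k : x <> 0 -> x <= 2 -> dgen x (S (2 * k)) <> 0.
Proof.
  intros Hx0 Hx2 E. destruct (Rlt_or_le x 0) as [Hneg|Hpos].
  - pose proof (dgen_odd_neg x Hneg k). lra.
  - pose proof (dgen_odd_twisted_pos x ltac:(lra) k) as H. rewrite E in H. lra.
Qed.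

Lemma alpha_root_gt_2 m x : x <> 0 -> alpha m x = 0 -> 2 < x.
Proof.
  intros Hx0 Ha. destruct (Rlt_le_dec 2 x) as [|Hx2]; [assumption|].
  exfalso. apply (dgen_odd_neq0 x m Hx0 Hx2).
  unfold alpha, Rdiv in Ha. replace (2 * m + 1)%nat with (S (2 * m)) in Ha by lia.
  apply Rmult_integral in Ha as [Ha|Ha]; [exact Ha|].
  exfalso. revert Ha. apply Rinv_neq_0_compat, INR_fact_neq_0.
Qed.

Lemma filterlim_Cmod_gt {F : (R -> Prop) -> Prop} (eta : R -> C) (l r : R) :
  filterlim eta F (locally (RtoC l)) -> r < l -> F (fun d => r < Cmod (eta d)).
Proof.
  intros Hlim Hrl. apply (Hlim (fun z => r < Cmod z)).
  exists (mkposreal (l - r) ltac:(lra)). intros z [Hz _].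
  change (Rabs (fst z - l) < l - r) in Hz. apply Rabs_def2 in Hz.
  pose proof (re_le_Cmod z). pose proof (Rle_abs (fst z)). unfold Re in *. lra.
Qed.

Theorem proposition2p3 :
  forall (m : nat), (1 <= m)%nat ->
  forall xi : R, xi <> 0 -> alpha m xi = 0 ->
    (0 < xi - 1 - sqrt ((xi - 1) ^ 2 - 1) < 1) /\
    (forall (eta : R -> C) (s : R), (s = 1 \/ s = -1) ->
       filterlim eta (at_right 0)
         (locally (RtoC (xi - 1 + s * sqrt ((xi - 1) ^ 2 - 1)))) ->
       at_right 0 (fun Delta => Cmod (eta Delta) < 1) ->
       s = -1).
Proof.
  (* alpha 0 x = 1 / x never vanishes. *)
  intros m _ xi Hxi Halpha.
  pose proof (alpha_root_gt_2 m xi Hxi Halpha) as H2.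
  assert (Hq : 0 <= (xi - 1) ^ 2 - 1) by nra.
  pose proof (sqrt_sqrt _ Hq). pose proof (sqrt_pos ((xi - 1) ^ 2 - 1)).
  split; [split; nra|].
  intros eta s [->| ->] Hlim Hsmall; [exfalso|reflexivity].
  assert (Hlarge := filterlim_Cmod_gt eta _ 1 Hlim ltac:(lra)).
  destruct (filter_ex _ (filter_and _ _ Hsmall Hlarge)) as [d Hd]. lra.
Qed.
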